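(* For all positive integers $n>k$, $\mathrm{msum}(n,n-k)=\mathrm{msum}(n,k)$ and $\mathrm{disc}(n,n-k)=\mathrm{disc}(n,k)$.
   Context: For positive integers $n>k$, let $S_n$ be the set of permutations $\pi=(\pi_1,\dots,\pi_n)$ of $1,\dots,n$, with cyclic indexing $\pi_{n+i}=\pi_i$, and $s_i=\sum_{j=0}^{k-1}\pi_{i+j}$ for $i=1,\dots,n$. Define $\mathrm{msum}(\pi,k)=\max\{s_i\}-\frac{k(n+1)}{2}$, $\mathrm{msum}(n,k)=\min_{\pi\in S_n}\mathrm{msum}(\pi,k)$, $\mathrm{disc}(\pi,k)=\max_i|s_i-\frac{k(n+1)}{2}|$, $\mathrm{disc}(n,k)=\min_{\pi\in S_n}\mathrm{disc}(\pi,k)$. *)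

From mathcomp Require Import all_boot all_order all_algebra all_fingroup.
Set Implicit Arguments. Unset Strict Implicit. Unset Printing Implicit Defensive.
Import Order.TTheory GRing.Theory Num.Theory.
Local Open Scope ring_scope.

(* A permutation pi of {1,...,n} is represented by s : 'S_n (a permutation
   of {0,...,n-1}) via pi_(m+1) = s m + 1.  Cyclic indexing: the entry at
   0-based position m (any natural number) is the entry at position m mod n. *)
Definition cyc_entry (n : nat) (s : 'S_n) (m : nat) : nat :=
  match @insub nat (fun x => x < n)%N _ (m %% n)%N with
  | Some i => (s i).+1
  | None => 0%N
  end.

Definition wsum (n k : nat) (s : 'S_n) (i : nat) : nat :=
  (\sum_(j < k) cyc_entry s (i + j))%N.

Definition center (n k : nat) : rat := (k * (n + 1))%:R / 2%:R.

Definition msum_perm (n k : nat) (s : 'S_n) : rat :=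
  (\max_(i < n) wsum k s i)%N%:R - center n k.

Definition disc_perm (n k : nat) (s : 'S_n) : rat :=
  \big[Num.max/0]_(i < n) `|(wsum k s i)%:R - center n k|.

(* minima over all permutations (the identity value is itself attained,
   so using it as the neutral element gives the true minimum) *)
Definition msum (n k : nat) : rat :=
  \big[Num.min/msum_perm k (1 : 'S_n)]_(s : 'S_n) msum_perm k s.

Definition disc (n k : nat) : rat :=
  \big[Num.min/disc_perm k (1 : 'S_n)]_(s : 'S_n) disc_perm k s.

From mathcomp Require Import all_boot all_order all_algebra all_fingroup.
From mathcomp Require Import zify lra.
Set Implicit Arguments. Unset Strict Implicit. Unset Printing Implicit Defensive.
Import Order.TTheory GRing.Theory Num.Theory.

(* Complementing a permutation, pi_i |-> n + 1 - pi_i, sends window sums of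
   length n - k to complements of window sums of length k: the window of
   length n - k starting at i + k and the window of length k starting at i
   cover one full period, whose sum is n(n+1)/2.  Hence the centred window
   sums of the complement for n - k are, up to a cyclic shift by k, those of
   pi for k, so msum and disc agree permutation by permutation; as
   complementation is a bijection of S_n, the minima over S_n agree too. *)

Section BigMinReindex.
Local Open Scope order_scope.
Context {disp : Order.disp_t} {T : orderType disp} {I : finType}.
Implicit Types F G : I -> T.

Lemma bigmin_id_attained F i j :
  \big[Order.min/F i]_k F k = \big[Order.min/F j]_k F k.
Proof.
wlog suff: i j / \big[Order.min/F i]_k F k <= \big[Order.min/F j]_k F k.
  by move=> le_ij; apply/le_anti; rewrite !le_ij.
by apply/bigmin_geP; split=> [|k _]; apply: bigmin_le.
Qed.

Lemma eq_bigmin_reindex (h : I -> I) F G i j :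
  injective h -> (forall k, F (h k) = G k) ->
  \big[Order.min/F i]_k F k = \big[Order.min/G j]_k G k.
Proof.
move=> inj_h FG; rewrite (reindex_inj inj_h) /=.
under eq_bigr do rewrite FG.
by rewrite -(f_invF inj_h i) FG; apply: bigmin_id_attained.
Qed.

End BigMinReindex.

Lemma eq_bigmax_natr_sub (R : numDomainType) (I : finType) (F G : I -> nat)
    (a b : R) :
  0 < #|I| -> (forall i, (F i)%:R - a = (G i)%:R - b)%R ->
  ((\max_i F i)%:R - a = (\max_i G i)%:R - b)%R.
Proof.
move=> I_gt0; wlog suff: F G a b / (forall i, (F i)%:R - a = (G i)%:R - b)%R ->
    ((\max_i F i)%:R - a <= (\max_i G i)%:R - b)%R.
  by move=> le_FG FG; apply/le_anti; rewrite !le_FG.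
move=> FG; have [i ->] := bigop.eq_bigmax F I_gt0.
by rewrite FG lerD2r ler_nat leq_bigmax.
Qed.

Lemma double_sum_succ N : (2 * \sum_(j < N) j.+1 = N * N.+1)%N.
Proof.
by elim: N => [|N IH]; rewrite ?big_ord0 // big_ord_recr /= mulnDr IH; lia.
Qed.

Definition rev_perm n : 'S_n := perm (@rev_ord_inj n).

Lemma wsum_mod n k (s : 'S_n) m : wsum k s (m %% n) = wsum k s m.
Proof. by apply: eq_bigr => j _; rewrite /cyc_entry modnDml. Qed.

Lemma wsum_cat n k l (s : 'S_n) i :
  wsum (k + l) s i = (wsum k s i + wsum l s (i + k))%N.
Proof.
rewrite /wsum big_split_ord /=; congr (_ + _)%N.
by apply: eq_bigr => j _; rewrite addnA.
Qed.

Section Window.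
Variable n' : nat.
Local Notation n := n'.+1.
Implicit Types s : 'S_n.

Lemma cyc_entryE s m : cyc_entry s m = (s (inZp m)).+1.
Proof.
rewrite /cyc_entry; case: insubP => [u _ /= u_m|]; last by rewrite ltn_pmod.
by congr (s _).+1; apply: val_inj.
Qed.

Lemma cyc_entry_compl s m :
  (cyc_entry (s * rev_perm n) m + cyc_entry s m = n.+1)%N.
Proof.
by rewrite !cyc_entryE permM permE /=; have := ltn_ord (s (inZp m)); lia.
Qed.

Lemma wsum_compl s l i :
  (wsum l (s * rev_perm n) i + wsum l s i = l * n.+1)%N.
Proof.
rewrite /wsum -big_split /= (eq_bigr (fun=> n.+1)) => [|j _].
  by rewrite sum_nat_const card_ord.
exact: cyc_entry_compl.
Qed.

Lemma double_wsum_full s i : (2 * wsum n s i = n * n.+1)%N.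
Proof.
rewrite -double_sum_succ /wsum; congr (2 * _)%N.
rewrite [RHS](reindex_inj (@perm_inj _ s)) [RHS](reindex_inj (addrI (inZp i))).
apply: eq_bigr => j _; rewrite cyc_entryE; congr (s _).+1.
by apply: val_inj; rewrite /= modnDml.
Qed.

Lemma double_wsum_compl s k i : (k <= n)%N ->
  (2 * wsum (n - k) (s * rev_perm n) (i + k) + k * n.+1
   = 2 * wsum k s i + (n - k) * n.+1)%N.
Proof.
move=> le_kn; have := wsum_cat k (n - k) s i; rewrite subnKC // => split_full.
have := double_wsum_full s i; have := wsum_compl s (n - k) (i + k).
rewrite split_full; nia.
Qed.

Lemma wsum_compl_centered s k i : (k <= n)%N ->
  ((wsum (n - k) (s * rev_perm n) (i + k))%:R - center n (n - k)
   = (wsum k s i)%:R - center n k :> rat)%R.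
Proof.
move=> le_kn.
have /(congr1 (fun m => m%:R : rat)) := double_wsum_compl s i le_kn.
rewrite /center !addn1 !natrD !natrM; lra.
Qed.

Lemma disc_perm_compl s k : (k <= n)%N ->
  disc_perm (n - k) (s * rev_perm n) = disc_perm k s.
Proof.
move=> le_kn; rewrite /disc_perm (reindex_inj (addIr (inZp k))) /=.
by apply: eq_bigr => i _; rewrite modnDmr wsum_mod wsum_compl_centered.
Qed.

Lemma msum_perm_compl s k : (k <= n)%N ->
  msum_perm (n - k) (s * rev_perm n) = msum_perm k s.
Proof.
move=> le_kn; rewrite /msum_perm (reindex_inj (addIr (inZp k))) /=.
apply: eq_bigmax_natr_sub => [|i]; first by rewrite card_ord.
by rewrite modnDmr wsum_mod wsum_compl_centered.
Qed.

End Window.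

Theorem proposition2p1 (n k : nat) :
  (0 < k)%N -> (k < n)%N ->
  msum n (n - k) = msum n k /\ disc n (n - k) = disc n k.
Proof.
case: n => [|n'] // _ /ltnW le_kn.
rewrite /msum /disc.
split; apply: (eq_bigmin_reindex 1%g 1%g (mulIg (rev_perm n'.+1))) => s.
  exact: msum_perm_compl.
exact: disc_perm_compl.
Qed.
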